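(* Let $U\in\mathbb{R}^{n\times d}$, let $\mathbf{x}_*\in\mathbb{R}^d$ be an $s$-sparse signal, $\mathbf{e}\in\mathbb{R}^n$, and $\mathbf{y}=U\mathbf{x}_*+\mathbf{e}$. Assume \[ \gamma := \delta_s + \sqrt{2}\,\theta_{s,s} + \delta_{3s} < 1 . \] Let $\Delta_1,\Delta_2,\ldots$ be a sequence with $\|\mathbf{x}_1-\mathbf{x}_*\|_2\le\Delta_1$ and $\Delta_{t+1}=\gamma\Delta_t+(1+\sqrt{2})\sqrt{s}\|U^\top\mathbf{e}\|_\infty$ for $t\ge1$. If Algorithm 1 is run with \[ \lambda_t=\frac{\delta_s+\sqrt{2}\theta_{s,s}}{\sqrt{s}}\Delta_t+\|U^\top\mathbf{e}\|_\infty, \] then for all $t\ge0$: (i) $|\mathcal{S}_{t+1}\setminus\mathcal{S}_*|\le s$, and (ii) $\|\mathbf{x}_{t+1}-\mathbf{x}_*\|_2\le\gamma^t\Delta_1+\frac{1-\gamma^t}{1-\gamma}(1+\sqrt{2})\sqrt{s}\|U^\top\mathbf{e}\|_\infty$.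
   Context: For $\mathbf{x}\in\mathbb{R}^d$, $\mathcal{S}(\mathbf{x})=\{i:[\mathbf{x}]_i\neq 0\}$; $\mathbf{x}$ is $s$-sparse if $|\mathcal{S}(\mathbf{x})|\le s$. $U_{\mathcal T}$ is the column submatrix of $U$ indexed by $\mathcal T$. $\delta_s$ is the smallest constant $\ge0$ with $(1-\delta_s)\|\mathbf{v}\|_2^2\le\|U_{\mathcal T}\mathbf{v}\|_2^2\le(1+\delta_s)\|\mathbf{v}\|_2^2$ for all $|\mathcal T|\le s$, $\mathbf{v}\in\mathbb{R}^{|\mathcal T|}$. $\theta_{s,s}$ (with $2s\le d$) is the smallest constant with $|\langle U_{\mathcal T}\mathbf{v},U_{\mathcal T'}\mathbf{v}'\rangle|\le\theta_{s,s}\|\mathbf{v}\|_2\|\mathbf{v}'\|_2$ for all disjoint $\mathcal T,\mathcal T'$ of size at most $s$. Algorithm 1: given $\lambda_1,\lambda_2,\ldots>0$, set $\mathbf{x}_1=0$ and for $t\ge1$, $\widehat{\mathbf{x}}_t=\mathbf{x}_t-U^\top(U\mathbf{x}_t-\mathbf{y})$, $\mathbf{x}_{t+1}=\mathrm{sign}(\widehat{\mathbf{x}}_t)[|\widehat{\mathbf{x}}_t|-\lambda_t]_+$ (componentwise soft-thresholding). $\mathcal{S}_t=\mathcal{S}(\mathbf{x}_t)$, $\mathcal{S}_*=\mathcal{S}(\mathbf{x}_* )$. *)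

From HB Require Import structures.
From mathcomp Require Import all_boot all_order all_algebra.
From mathcomp Require Import all_classical all_reals.
Set Implicit Arguments. Unset Strict Implicit. Unset Printing Implicit Defensive.
Import Order.TTheory GRing.Theory Num.Theory.
Local Open Scope ring_scope.
Local Open Scope classical_set_scope.

Section Defs.
Variable R : realType.

Definition sqnorm2 k (v : 'cV[R]_k) : R := \sum_(i < k) (v i 0) ^+ 2.
Definition norm2 k (v : 'cV[R]_k) : R := Num.sqrt (sqnorm2 v).
Definition inner k (a b : 'cV[R]_k) : R := \sum_(i < k) a i 0 * b i 0.
Definition norminf k (v : 'cV[R]_k) : R := \big[Num.max/0]_(i < k) `|v i 0|.

Definition supp k (v : 'cV[R]_k) : {set 'I_k} := [set i | v i 0 != 0].

(* U_T : the column submatrix of U indexed by T (columns in increasing order) *)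
Definition subcols n d (U : 'M[R]_(n, d)) (T : {set 'I_d}) : 'M[R]_(n, #|T|) :=
  colsub (@enum_val _ (mem T)) U.

Definition rip_set n d (U : 'M[R]_(n, d)) (s : nat) : set R :=
  [set c | 0 <= c /\
    forall T : {set 'I_d}, (#|T| <= s)%N -> forall v : 'cV[R]_#|T|,
      (1 - c) * sqnorm2 v <= sqnorm2 (subcols U T *m v) /\
      sqnorm2 (subcols U T *m v) <= (1 + c) * sqnorm2 v].
Definition rip_delta n d (U : 'M[R]_(n, d)) (s : nat) : R := inf (rip_set U s).

Definition roc_set n d (U : 'M[R]_(n, d)) (s : nat) : set R :=
  [set c | 0 <= c /\
    forall T T' : {set 'I_d}, (T :&: T' == finset.set0) -> (#|T| <= s)%N -> (#|T'| <= s)%N ->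
      forall (v : 'cV[R]_#|T|) (v' : 'cV[R]_#|T'|),
        `|inner (subcols U T *m v) (subcols U T' *m v')| <= c * norm2 v * norm2 v'].
Definition roc_theta n d (U : 'M[R]_(n, d)) (s : nat) : R := inf (roc_set U s).

Definition soft d (v : 'cV[R]_d) (lam : R) : 'cV[R]_d :=
  \col_i (Num.sg (v i 0) * Num.max (`|v i 0| - lam) 0).

(* Algorithm 1: iterates x_t for t >= 1 (x_0 is an unused dummy, set to 0);
   x_1 = 0, x_{t+1} = soft(x_t - U^T (U x_t - y), lam_t). *)
Fixpoint alg1 n d (U : 'M[R]_(n, d)) (y : 'cV[R]_n) (lam : nat -> R) (t : nat)
  : 'cV[R]_d :=
  match t with
  | 0 => 0
  | t'.+1 =>
      match t' with
      | 0 => 0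
      | _ => let x := alg1 U y lam t' in
             soft (x - U^T *m (U *m x - y)) (lam t')
      end
  end.

End Defs.

From HB Require Import structures.
From mathcomp Require Import all_boot all_order all_algebra.
From mathcomp Require Import all_classical all_reals.
From mathcomp Require Import ring lra.
Import Order.TTheory GRing.Theory Num.Theory.
Local Open Scope ring_scope.

Set Implicit Arguments. Unset Strict Implicit. Unset Printing Implicit Defensive.

(* Put [h = x_t - x_*]. The gradient step gives [xhat_t - x_* = (h - U^T U h) + U^T e].
   On a set [T] of at most [s] coordinates outside [S_*], the part [h - U^T U h] has norm at
   most [(delta_s + sqrt 2 theta_{s,s}) |h|]: the RIP handles the piece of [h] on [T] and the
   ROC the two pieces outside [T], on [S_*] and on [S_t \ S_*]. Every coordinate that soft
   thresholding keeps outside [S_*] exceeds [lambda_t] in modulus, so with the chosen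
   [lambda_t] there cannot be [s + 1] of them, which is (i). On [S_{t+1} :|: S_*] the RIP of
   order [3 s] bounds the same part by [delta_{3s} |h|], and thresholding moves each
   coordinate by at most [lambda_t]; hence [|x_{t+1} - x_*| <= Delta_{t+1}] by induction, and
   unrolling the affine recursion for [Delta] gives (ii). *)

Lemma disjoint_setD (T : finType) (A B : {set T}) : [disjoint B & A :\: B].
Proof.
rewrite -setI_eq0; apply/eqP/finset.setP => i.
by rewrite !inE; case: (i \in B); rewrite ?andbF.
Qed.

Section Sparse.
Variable R : realType.
Implicit Types (k : nat) (lam u : R).

Lemma sqnorm2E k (v : 'cV[R]_k) : sqnorm2 v = inner v v.
Proof. by apply: eq_bigr => i _; rewrite expr2. Qed.

Lemma sqnorm2_ge0 k (v : 'cV[R]_k) : 0 <= sqnorm2 v.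
Proof. by apply: sumr_ge0 => i _; rewrite sqr_ge0. Qed.

Lemma norm2_ge0 k (v : 'cV[R]_k) : 0 <= norm2 v.
Proof. exact: sqrtr_ge0. Qed.

Lemma sqr_norm2 k (v : 'cV[R]_k) : norm2 v ^+ 2 = sqnorm2 v.
Proof. by rewrite sqr_sqrtr // sqnorm2_ge0. Qed.

Lemma norm2_le k (v : 'cV[R]_k) x : 0 <= x -> (norm2 v <= x) = (sqnorm2 v <= x ^+ 2).
Proof. by move=> x0; rewrite -ler_sqr ?sqr_norm2 // nnegrE ?norm2_ge0. Qed.

Lemma sqnorm2_eq0 k (v : 'cV[R]_k) : sqnorm2 v = 0 -> v = 0.
Proof.
move/psumr_eq0P => v0; apply/matrixP => i j; rewrite (ord1 j) mxE.
by apply/eqP; rewrite -sqrf_eq0 v0 // => l _; rewrite sqr_ge0.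
Qed.

Lemma norm2_eq0 k (v : 'cV[R]_k) : norm2 v = 0 -> v = 0.
Proof. by move=> v0; apply: sqnorm2_eq0; rewrite -sqr_norm2 v0 expr0n. Qed.

Lemma norm2Z k x (v : 'cV[R]_k) : norm2 (x *: v) = `|x| * norm2 v.
Proof.
rewrite /norm2 -(sqrtr_sqr x) -sqrtrM ?sqr_ge0 // /sqnorm2 mulr_sumr.
by congr Num.sqrt; apply: eq_bigr => i _; rewrite mxE exprMn.
Qed.

Lemma innerC k (a b : 'cV[R]_k) : inner a b = inner b a.
Proof. by apply: eq_bigr => i _; rewrite mulrC. Qed.

Lemma innerDl k (a b c : 'cV[R]_k) : inner (a + b) c = inner a c + inner b c.
Proof. by rewrite /inner -big_split; apply: eq_bigr => i _; rewrite !mxE mulrDl. Qed.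

Lemma innerZl k x (a b : 'cV[R]_k) : inner (x *: a) b = x * inner a b.
Proof. by rewrite /inner mulr_sumr; apply: eq_bigr => i _; rewrite !mxE mulrA. Qed.

Lemma innerNl k (a b : 'cV[R]_k) : inner (- a) b = - inner a b.
Proof. by rewrite -scaleN1r innerZl mulN1r. Qed.

Lemma innerBl k (a b c : 'cV[R]_k) : inner (a - b) c = inner a c - inner b c.
Proof. by rewrite innerDl innerNl. Qed.

Lemma innerDr k (a b c : 'cV[R]_k) : inner a (b + c) = inner a b + inner a c.
Proof. by rewrite innerC innerDl !(innerC a). Qed.

Lemma innerZr k x (a b : 'cV[R]_k) : inner a (x *: b) = x * inner a b.
Proof. by rewrite innerC innerZl innerC. Qed.

Lemma innerNr k (a b : 'cV[R]_k) : inner a (- b) = - inner a b.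
Proof. by rewrite innerC innerNl innerC. Qed.

Lemma innerBr k (a b c : 'cV[R]_k) : inner a (b - c) = inner a b - inner a c.
Proof. by rewrite innerDr innerNr. Qed.

Lemma inner0r k (a : 'cV[R]_k) : inner a 0 = 0.
Proof. by rewrite /inner big1 // => i _; rewrite mxE mulr0. Qed.

Lemma inner0l k (a : 'cV[R]_k) : inner 0 a = 0.
Proof. by rewrite innerC inner0r. Qed.

Lemma inner_trmx n k (U : 'M[R]_(n, k)) a b : inner a (U^T *m b) = inner (U *m a) b.
Proof.
rewrite /inner; under eq_bigr => i _ do rewrite mxE mulr_sumr.
under [RHS]eq_bigr => i _ do rewrite mxE mulr_suml.
by rewrite exchange_big; apply: eq_bigr => i _; apply: eq_bigr => j _; rewrite mxE; ring.
Qed.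

Lemma sqnorm2_parallelogram k (a b : 'cV[R]_k) :
  sqnorm2 (a + b) + sqnorm2 (a - b) = 2 * (sqnorm2 a + sqnorm2 b).
Proof.
by rewrite !sqnorm2E !(innerDl, innerDr, innerNl, innerNr) (innerC b a); ring.
Qed.

Lemma cauchy_schwarz_sqr k (a b : 'cV[R]_k) : inner a b ^+ 2 <= sqnorm2 a * sqnorm2 b.
Proof.
have [a0|a_neq0] := eqVneq (sqnorm2 a) 0.
  rewrite a0 mul0r (sqnorm2_eq0 a0) /inner big1 ?expr0n // => i _.
  by rewrite mxE mul0r.
have a_gt0 : 0 < sqnorm2 a by rewrite lt_def a_neq0 sqnorm2_ge0.
(* [0 <= |t a - b|^2] at the minimiser [t = <a,b> / |a|^2] *)
have := sqnorm2_ge0 ((inner a b / sqnorm2 a) *: a - b).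
rewrite !sqnorm2E !(innerBl, innerBr, innerZl, innerZr) (innerC b a) -!sqnorm2E.
have -> : inner a b / sqnorm2 a * (inner a b / sqnorm2 a * sqnorm2 a - inner a b)
          - (inner a b / sqnorm2 a * inner a b - sqnorm2 b)
          = sqnorm2 b - inner a b ^+ 2 / sqnorm2 a by field.
by rewrite subr_ge0 ler_pdivrMr // mulrC.
Qed.

Lemma cauchy_schwarz k (a b : 'cV[R]_k) : `|inner a b| <= norm2 a * norm2 b.
Proof.
rewrite -ler_sqr ?nnegrE ?mulr_ge0 ?norm2_ge0 //.
by rewrite real_normK ?num_real // exprMn !sqr_norm2 cauchy_schwarz_sqr.
Qed.

Lemma norm2D_le k (a b : 'cV[R]_k) : norm2 (a + b) <= norm2 a + norm2 b.
Proof.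
rewrite norm2_le ?addr_ge0 ?norm2_ge0 // sqnorm2E innerDl !innerDr (innerC b a).
rewrite -!sqnorm2E -!sqr_norm2 sqrrD.
have := le_trans (ler_norm _) (cauchy_schwarz a b); lra.
Qed.

Lemma norm2_le_coordD k (a b c : 'cV[R]_k) :
  (forall i, `|a i 0| <= `|b i 0| + `|c i 0|) -> norm2 a <= norm2 b + norm2 c.
Proof.
pose abs (v : 'cV[R]_k) := \col_i `|v i 0|.
have norm2_abs v : norm2 (abs v) = norm2 v.
  by congr Num.sqrt; apply: eq_bigr => i _; rewrite mxE real_normK ?num_real.
move=> abc; rewrite -(norm2_abs b) -(norm2_abs c); apply: le_trans (norm2D_le _ _).
apply/ler_wsqrtr/ler_sum => i _; rewrite !mxE -real_normK ?num_real // ler_sqr ?nnegrE //.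
by rewrite addr_ge0.
Qed.

Lemma norminf_ge k (v : 'cV[R]_k) i : `|v i 0| <= norminf v.
Proof. exact: (le_bigmax 0 (fun i => `|v i 0|) i). Qed.

Lemma norminf_ge0 k (v : 'cV[R]_k) : 0 <= norminf v.
Proof. by rewrite /norminf; elim/big_ind: _ => //= x y x0 y0; rewrite le_max x0. Qed.

Lemma supp0 k : supp (0 : 'cV[R]_k) = finset.set0.
Proof. by apply/finset.setP => i; rewrite !inE mxE eqxx. Qed.

Lemma supp_subsetP k (v : 'cV[R]_k) (W : {set 'I_k}) :
  reflect (forall i, i \notin W -> v i 0 = 0) (supp v \subset W).
Proof.
apply: (iffP fintype.subsetP) => [vW i|vW i].
  by apply: contraNeq => nz; apply: vW; rewrite inE.
by rewrite inE; apply: contraR => /vW ->; rewrite eqxx.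
Qed.

Lemma supp_addr_subset k (a b : 'cV[R]_k) (W : {set 'I_k}) :
  supp a \subset W -> supp b \subset W -> supp (a + b) \subset W.
Proof.
move=> /supp_subsetP aW /supp_subsetP bW.
by apply/supp_subsetP => i iW; rewrite mxE aW ?bW ?addr0.
Qed.

Lemma supp_scale_subset k x (a : 'cV[R]_k) (W : {set 'I_k}) :
  supp a \subset W -> supp (x *: a) \subset W.
Proof. by move=> /supp_subsetP aW; apply/supp_subsetP => i iW; rewrite mxE aW ?mulr0. Qed.

Lemma supp_subr_subset k (a b : 'cV[R]_k) (W : {set 'I_k}) :
  supp a \subset W -> supp b \subset W -> supp (a - b) \subset W.
Proof. by move=> aW bW; rewrite -scaleN1r supp_addr_subset ?supp_scale_subset. Qed.

Lemma inner_disjoint k (A B : {set 'I_k}) (a b : 'cV[R]_k) :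
  [disjoint A & B] -> supp a \subset A -> supp b \subset B -> inner a b = 0.
Proof.
move=> AB /supp_subsetP aA /supp_subsetP bB; rewrite /inner big1 // => i _.
by have [iA|/aA ->] := boolP (i \in A); rewrite ?mul0r // bB ?mulr0 // (disjointFr AB iA).
Qed.

Definition prj k (A : {set 'I_k}) (v : 'cV[R]_k) : 'cV[R]_k :=
  \col_i (if i \in A then v i 0 else 0).

Lemma prjE k (A : {set 'I_k}) (v : 'cV[R]_k) i :
  prj A v i 0 = if i \in A then v i 0 else 0.
Proof. by rewrite mxE. Qed.

Lemma notin_supp k (v : 'cV[R]_k) i : i \notin supp v -> v i 0 = 0.
Proof. by rewrite inE negbK => /eqP. Qed.

Lemma supp_prj k (A : {set 'I_k}) (v : 'cV[R]_k) : supp (prj A v) \subset A.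
Proof. by apply/supp_subsetP => i /negbTE iA; rewrite mxE iA. Qed.

Lemma prjD k (A : {set 'I_k}) (a b : 'cV[R]_k) : prj A (a + b) = prj A a + prj A b.
Proof. by apply/matrixP => i j; rewrite !mxE; case: (i \in A); rewrite ?addr0. Qed.

Lemma prj_setC k (A : {set 'I_k}) (v : 'cV[R]_k) : prj A v + prj (~: A) v = v.
Proof.
by apply/matrixP => i j; rewrite (ord1 j) !mxE inE; case: (i \in A); rewrite ?addr0 ?add0r.
Qed.

Lemma sqnorm2_prj_sum k (A : {set 'I_k}) (v : 'cV[R]_k) :
  sqnorm2 (prj A v) = \sum_(i in A) v i 0 ^+ 2.
Proof.
rewrite /sqnorm2 [RHS]big_mkcond; apply: eq_bigr => i _.
by rewrite mxE; case: (i \in A); rewrite ?expr0n.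
Qed.

Lemma sqnorm2_prj_setC k (A : {set 'I_k}) (v : 'cV[R]_k) :
  sqnorm2 v = sqnorm2 (prj A v) + sqnorm2 (prj (~: A) v).
Proof.
rewrite !sqnorm2_prj_sum /sqnorm2 (bigID (mem A)) /=.
by congr (_ + _); apply: eq_bigl => i; rewrite inE.
Qed.

Lemma inner_prj k (A : {set 'I_k}) (v : 'cV[R]_k) : inner (prj A v) v = sqnorm2 (prj A v).
Proof. by apply: eq_bigr => i _; rewrite mxE; case: (i \in A); rewrite ?mul0r ?expr0n ?expr2. Qed.

Lemma norm2_prj_norminf k (A : {set 'I_k}) (v : 'cV[R]_k) :
  norm2 (prj A v) <= Num.sqrt #|A|%:R * norminf v.
Proof.
rewrite norm2_le ?mulr_ge0 ?sqrtr_ge0 ?norminf_ge0 // exprMn sqr_sqrtr // sqnorm2_prj_sum.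
rewrite -sum1_card natr_sum mulr_suml; apply: ler_sum => i _.
by rewrite mul1r -real_normK ?num_real // ler_sqr ?nnegrE ?norminf_ge0 ?norminf_ge.
Qed.

(** * The restricted isometry and orthogonality constants *)

Definition compress d (T : {set 'I_d}) (w : 'cV[R]_d) : 'cV[R]_#|T| :=
  \col_j w (enum_val j) 0.

Lemma sum_compress d (T : {set 'I_d}) (w : 'cV[R]_d) (F : 'I_d -> R -> R) :
  supp w \subset T -> (forall j, F j 0 = 0) ->
  \sum_j F (enum_val j) (compress T w j 0) = \sum_i F i (w i 0).
Proof.
move=> /supp_subsetP wT F0; rewrite [RHS](bigID (mem T)) /= [X in _ = _ + X]big1.
  by rewrite addr0 [RHS]big_enum_val; apply: eq_bigr => j _; rewrite mxE.
by move=> i /wT ->.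
Qed.

Lemma subcols_mul_compress n d (U : 'M[R]_(n, d)) (T : {set 'I_d}) (w : 'cV[R]_d) :
  supp w \subset T -> subcols U T *m compress T w = U *m w.
Proof.
move=> wT; apply/matrixP => i j; rewrite (ord1 j) !mxE.
rewrite -(sum_compress (F := fun l x => U i l * x) wT) => [|l]; last by rewrite mulr0.
by apply: eq_bigr => l _; rewrite mxE.
Qed.

Lemma sqnorm2_compress d (T : {set 'I_d}) (w : 'cV[R]_d) :
  supp w \subset T -> sqnorm2 (compress T w) = sqnorm2 w.
Proof. by move=> wT; rewrite /sqnorm2 -(sum_compress (F := fun _ x => x ^+ 2) wT) // expr0n. Qed.

Lemma norm2_compress d (T : {set 'I_d}) (w : 'cV[R]_d) :
  supp w \subset T -> norm2 (compress T w) = norm2 w.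
Proof. by move=> wT; rewrite /norm2 sqnorm2_compress. Qed.

(* The squared Frobenius norm bounds every restricted operator norm, so [rip_set] and
   [roc_set] are nonempty and [rip_delta], [roc_theta] are genuine infima. *)
Definition sqfrob n m (A : 'M[R]_(n, m)) : R := \sum_i \sum_j A i j ^+ 2.

Lemma sqfrob_ge0 n m (A : 'M[R]_(n, m)) : 0 <= sqfrob A.
Proof. by apply: sumr_ge0 => i _; apply: sumr_ge0 => j _; rewrite sqr_ge0. Qed.

Lemma sqnorm2_mulmx_le n m (A : 'M[R]_(n, m)) v : sqnorm2 (A *m v) <= sqfrob A * sqnorm2 v.
Proof.
rewrite /sqfrob mulr_suml; apply: ler_sum => i _.
have := cauchy_schwarz_sqr (\col_j A i j) v.
rewrite /inner /sqnorm2 mxE.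
by under eq_bigr => j _ do rewrite mxE; under [X in _ <= X * _]eq_bigr => j _ do rewrite mxE.
Qed.

Lemma sqfrob_subcols n d (U : 'M[R]_(n, d)) (T : {set 'I_d}) :
  sqfrob (subcols U T) <= sqfrob U.
Proof.
apply: ler_sum => i _; rewrite [X in _ <= X](bigID (mem T)) /= [X in _ <= X + _]big_enum_val.
under eq_bigr => j _ do rewrite mxE.
by rewrite lerDl; apply: sumr_ge0 => j _; rewrite sqr_ge0.
Qed.

Lemma rip_set_nonempty n d (U : 'M[R]_(n, d)) s : rip_set U s (1 + sqfrob U).
Proof.
have F0 := sqfrob_ge0 U; split => [|T _ v]; first lra.
have := sqnorm2_ge0 v; have := sqnorm2_ge0 (subcols U T *m v).
have := le_trans (sqnorm2_mulmx_le _ v) (ler_wpM2r (sqnorm2_ge0 v) (sqfrob_subcols U T)).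
split; nra.
Qed.

Lemma roc_set_nonempty n d (U : 'M[R]_(n, d)) s : roc_set U s (sqfrob U).
Proof.
split=> [|T T' _ _ _ v v']; first exact: sqfrob_ge0.
have normU (A : {set 'I_d}) (w : 'cV[R]_#|A|) :
    norm2 (subcols U A *m w) <= Num.sqrt (sqfrob U) * norm2 w.
  rewrite norm2_le ?mulr_ge0 ?sqrtr_ge0 ?norm2_ge0 // exprMn sqr_sqrtr ?sqfrob_ge0 //.
  rewrite sqr_norm2; apply: le_trans (sqnorm2_mulmx_le _ _) _.
  by rewrite ler_wpM2r ?sqnorm2_ge0 ?sqfrob_subcols.
apply: le_trans (cauchy_schwarz _ _) _.
have -> : sqfrob U * norm2 v * norm2 v'
    = Num.sqrt (sqfrob U) * norm2 v * (Num.sqrt (sqfrob U) * norm2 v').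
  by rewrite mulrACA -expr2 sqr_sqrtr ?sqfrob_ge0 // mulrA.
by apply: ler_pM; rewrite ?norm2_ge0 ?normU.
Qed.

(* Bounds linear in the constant pass to the infimum, so [rip_delta] and [roc_theta]
   satisfy the defining inequalities themselves. *)
Lemma le_mul_inf (E : set R) a K : (E !=set0)%classic -> 0 <= K ->
  (forall c, E c -> a <= c * K) -> a <= inf E * K.
Proof.
move=> [c0 Ec0] K0 aE; have [K_eq0|K_neq0] := eqVneq K 0.
  by move: (aE c0 Ec0); rewrite K_eq0 !mulr0.
have K_gt0 : 0 < K by rewrite lt_def K_neq0.
rewrite -ler_pdivrMr //; apply: lb_le_inf => [|c Ec]; first by exists c0.
by rewrite ler_pdivrMr ?aE.
Qed.

Lemma rip_delta_ge0 n d (U : 'M[R]_(n, d)) s : 0 <= rip_delta U s.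
Proof. by apply: lb_le_inf => [|c []//]; exists (1 + sqfrob U); apply: rip_set_nonempty. Qed.

Lemma roc_theta_ge0 n d (U : 'M[R]_(n, d)) s : 0 <= roc_theta U s.
Proof. by apply: lb_le_inf => [|c []//]; exists (sqfrob U); apply: roc_set_nonempty. Qed.

Lemma rip_sqnorm2 n d (U : 'M[R]_(n, d)) s (w : 'cV[R]_d) : (#|supp w| <= s)%N ->
  `|sqnorm2 w - sqnorm2 (U *m w)| <= rip_delta U s * sqnorm2 w.
Proof.
move=> ws; apply: le_mul_inf; rewrite ?sqnorm2_ge0 //.
  by exists (1 + sqfrob U); apply: rip_set_nonempty.
move=> c [_ /(_ _ ws (compress (supp w) w))].
by rewrite subcols_mul_compress ?sqnorm2_compress // ler_norml => -[]; lra.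
Qed.

Lemma roc_inner n d (U : 'M[R]_(n, d)) s (T T' : {set 'I_d}) (w w' : 'cV[R]_d) :
  [disjoint T & T'] -> (#|T| <= s)%N -> (#|T'| <= s)%N ->
  supp w \subset T -> supp w' \subset T' ->
  `|inner (U *m w) (U *m w')| <= roc_theta U s * (norm2 w * norm2 w').
Proof.
move=> /disjoint_setI0/eqP TT' Ts T's wT w'T'; apply: le_mul_inf.
- by exists (sqfrob U); apply: roc_set_nonempty.
- by rewrite mulr_ge0 ?norm2_ge0.
move=> c [_ /(_ _ _ TT' Ts T's (compress T w) (compress T' w'))].
by rewrite !subcols_mul_compress ?norm2_compress // mulrA.
Qed.

(** * Restricted bounds on [h - U^T U h] *)

Definition gram_defect n d (U : 'M[R]_(n, d)) (a b : 'cV[R]_d) : R :=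
  inner a b - inner (U *m a) (U *m b).

Lemma inner_gram_defect n d (U : 'M[R]_(n, d)) a b :
  inner a (b - U^T *m (U *m b)) = gram_defect U a b.
Proof. by rewrite innerBr inner_trmx. Qed.

Lemma rip_gram_defect_sqr n d (U : 'M[R]_(n, d)) k (W : {set 'I_d}) v :
  (#|W| <= k)%N -> supp v \subset W -> `|gram_defect U v v| <= rip_delta U k * sqnorm2 v.
Proof.
move=> Wk vW; rewrite /gram_defect -!sqnorm2E.
exact/rip_sqnorm2/(leq_trans (subset_leq_card vW)).
Qed.

Lemma rip_gram_defect n d (U : 'M[R]_(n, d)) k (W : {set 'I_d}) a b :
  (#|W| <= k)%N -> supp a \subset W -> supp b \subset W ->
  `|gram_defect U a b| <= rip_delta U k * (norm2 a * norm2 b).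
Proof.
move=> Wk aW bW; have del0 := rip_delta_ge0 U k.
have [/norm2_eq0 a0|a_neq0] := eqVneq (norm2 a) 0.
  by rewrite a0 /gram_defect mulmx0 !inner0l subrr normr0 mulr_ge0 ?mulr_ge0 ?norm2_ge0.
have [/norm2_eq0 b0|b_neq0] := eqVneq (norm2 b) 0.
  by rewrite b0 /gram_defect mulmx0 !inner0r subrr normr0 mulr_ge0 ?mulr_ge0 ?norm2_ge0.
have unit_bound a' b' : norm2 a' = 1 -> norm2 b' = 1 -> supp a' \subset W -> supp b' \subset W ->
    `|gram_defect U a' b'| <= rip_delta U k.
  move=> a'1 b'1 a'W b'W.
  have polar : 4 * gram_defect U a' b'
      = gram_defect U (a' + b') (a' + b') - gram_defect U (a' - b') (a' - b').
    rewrite /gram_defect !(mulmxDr, mulmxN) !(innerDl, innerDr, innerNl, innerNr).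
    by rewrite (innerC b' a') (innerC (U *m b') (U *m a')); ring.
  have parallel := sqnorm2_parallelogram a' b'.
  rewrite -(sqr_norm2 a') -(sqr_norm2 b') a'1 b'1 expr1n in parallel.
  have := rip_gram_defect_sqr U Wk (supp_addr_subset a'W b'W).
  have := rip_gram_defect_sqr U Wk (supp_subr_subset a'W b'W).
  have := ler_normB (gram_defect U (a' + b') (a' + b')) (gram_defect U (a' - b') (a' - b')).
  rewrite -polar normrM ger0_norm // => le4 le_minus le_plus.
  have : rip_delta U k * sqnorm2 (a' + b') + rip_delta U k * sqnorm2 (a' - b') = 4 * rip_delta U k.
    by rewrite -mulrDr parallel; ring.
  lra.
have norm2_normalize (v : 'cV[R]_d) : norm2 v != 0 -> norm2 ((norm2 v)^-1 *: v) = 1.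
  by move=> v0; rewrite norm2Z ger0_norm ?invr_ge0 ?norm2_ge0 // mulVf.
set a' := (norm2 a)^-1 *: a; set b' := (norm2 b)^-1 *: b.
have Ea : a = norm2 a *: a' by rewrite scalerA divff // scale1r.
have Eb : b = norm2 b *: b' by rewrite scalerA divff // scale1r.
have -> : gram_defect U a b = norm2 a * norm2 b * gram_defect U a' b'.
  by rewrite {1}Ea {1}Eb /gram_defect -!scalemxAr !(innerZl, innerZr); ring.
rewrite normrM ger0_norm ?mulr_ge0 ?norm2_ge0 // mulrC ler_wpM2r ?mulr_ge0 ?norm2_ge0 //.
by rewrite unit_bound ?norm2_normalize ?supp_scale_subset.
Qed.

Lemma le_of_sqr_le_mul (x y : R) : 0 <= x -> 0 <= y -> x ^+ 2 <= x * y -> x <= y.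
Proof.
move=> x0 y0; have [->//|x_neq0] := eqVneq x 0.
by rewrite expr2 ler_pM2l // lt_def x_neq0.
Qed.

Lemma norm2_prj_gram_rip n d (U : 'M[R]_(n, d)) k (W S : {set 'I_d}) h :
  (#|W| <= k)%N -> S \subset W -> supp h \subset W ->
  norm2 (prj S (h - U^T *m (U *m h))) <= rip_delta U k * norm2 h.
Proof.
move=> Wk SW hW; set w := prj S _.
have wW : supp w \subset W := fintype.subset_trans (supp_prj _ _) SW.
apply: le_of_sqr_le_mul; rewrite ?norm2_ge0 ?mulr_ge0 ?rip_delta_ge0 ?norm2_ge0 //.
rewrite sqr_norm2 /w -inner_prj -/w inner_gram_defect.
by rewrite mulrCA; apply: le_trans (ler_norm _) (rip_gram_defect U Wk wW hW).
Qed.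

Lemma le_sqrt2_norm3 (del th a b c N : R) : 0 <= del -> 0 <= th ->
  0 <= a -> 0 <= b -> 0 <= c -> 0 <= N -> N ^+ 2 = a ^+ 2 + b ^+ 2 + c ^+ 2 ->
  del * a + th * b + th * c <= (del + Num.sqrt 2 * th) * N.
Proof.
move=> del0 th0 a0 b0 c0 N0 N2.
have aN : a <= N by rewrite -ler_sqr ?nnegrE // N2 -addrA lerDl addr_ge0 ?sqr_ge0.
have bcN : b + c <= Num.sqrt 2 * N.
  rewrite -ler_sqr ?nnegrE ?addr_ge0 ?mulr_ge0 ?sqrtr_ge0 // exprMn sqr_sqrtr // N2.
  have := sqr_ge0 (b - c); have := sqr_ge0 a; rewrite sqrrB sqrrD; lra.
have := ler_wpM2l del0 aN; have := ler_wpM2l th0 bcN; lra.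
Qed.

Lemma norm2_prj_gram_roc n d (U : 'M[R]_(n, d)) s (T S S' : {set 'I_d}) h :
  [disjoint T & S] -> (#|T| <= s)%N -> (#|S| <= s)%N -> (#|S' :\: S| <= s)%N ->
  supp h \subset S' :|: S ->
  norm2 (prj T (h - U^T *m (U *m h))) <= (rip_delta U s + Num.sqrt 2 * roc_theta U s) * norm2 h.
Proof.
move=> TS Ts Ss S's /supp_subsetP hS'S; set w := prj T _.
set hT := prj T h; set hTc := prj (~: T) h.
set hS := prj S hTc; set hR := prj (~: S) hTc.
have wT : supp w \subset T := supp_prj _ _.
have hR_sub : supp hR \subset (S' :\: S) :\: T.
  apply/supp_subsetP => i iR; rewrite !mxE !inE.
  have [//|iS] := boolP (i \in S); have [//|iT] := boolP (i \in T).
  by rewrite hS'S // !inE (negbTE iS) orbF; move: iR; rewrite !inE iS iT.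
have Rs : (#|(S' :\: S) :\: T| <= s)%N := leq_trans (subset_leq_card (subsetDl _ _)) S's.
have h_split : h = hT + hS + hR by rewrite -addrA !prj_setC.
have w_hTc : inner w hTc = 0.
  by apply: (inner_disjoint _ wT (supp_prj _ _)); rewrite -finset.subsets_disjoint.
(* [w] lives on [T], so [h] enters directly only through [hT]; [hS] and [hR] contribute
   Gram cross terms, bounded by the ROC. *)
have w2 : sqnorm2 w
    = gram_defect U w hT - inner (U *m w) (U *m hS) - inner (U *m w) (U *m hR).
  rewrite /w -inner_prj -/w inner_gram_defect /gram_defect.
  rewrite -[h in inner w h](prj_setC T h) -/hT -/hTc innerDr w_hTc.
  by rewrite h_split !mulmxDr !innerDr; ring.
have h2 : norm2 h ^+ 2 = norm2 hT ^+ 2 + norm2 hS ^+ 2 + norm2 hR ^+ 2.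
  by rewrite !sqr_norm2 (sqnorm2_prj_setC T h) (sqnorm2_prj_setC S hTc) addrA.
apply: le_of_sqr_le_mul; first exact: norm2_ge0.
  by rewrite !mulr_ge0 ?addr_ge0 ?mulr_ge0 ?sqrtr_ge0 ?rip_delta_ge0 ?roc_theta_ge0 ?norm2_ge0.
set del := rip_delta U s; set th := roc_theta U s.
apply: (@le_trans _ _ (norm2 w * (del * norm2 hT + th * norm2 hS + th * norm2 hR))); last first.
  by rewrite ler_wpM2l ?norm2_ge0 // le_sqrt2_norm3 ?norm2_ge0 ?rip_delta_ge0 ?roc_theta_ge0.
have := rip_gram_defect U Ts wT (supp_prj T h).
have := roc_inner U TS Ts Ss wT (supp_prj S hTc).
have := roc_inner U (disjoint_setD _ _) Ts Rs wT hR_sub.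
have -> : norm2 w * (del * norm2 hT + th * norm2 hS + th * norm2 hR)
    = del * (norm2 w * norm2 hT) + th * (norm2 w * norm2 hS) + th * (norm2 w * norm2 hR) by ring.
rewrite sqr_norm2 w2 -/del -/th !ler_norml; lra.
Qed.

Definition softr lam u : R := Num.sg u * Num.max (`|u| - lam) 0.

Lemma soft_coord d (v : 'cV[R]_d) lam i : soft v lam i 0 = softr lam (v i 0).
Proof. by rewrite mxE. Qed.

Lemma norm_softr lam u : 0 <= lam -> `|softr lam u| = Num.max (`|u| - lam) 0.
Proof.
move=> lam0; have max0 : 0 <= Num.max (`|u| - lam) 0 by rewrite le_max lexx orbT.
rewrite normrM normr_sg (ger0_norm max0).
have [->|_] := eqVneq u 0; last by rewrite mul1r.
by rewrite normr0 sub0r mul0r; apply/esym/max_idPr; rewrite oppr_le0.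
Qed.

Lemma softr_norm_le lam u : 0 <= lam -> `|softr lam u| <= `|u|.
Proof. by move=> lam0; rewrite norm_softr // ge_max gerBl lam0 normr_ge0. Qed.

Lemma softr_neq0 lam u : 0 <= lam -> softr lam u != 0 -> lam < `|u|.
Proof.
move=> lam0; rewrite -normr_eq0 norm_softr //; apply: contraNT; rewrite -leNgt -subr_le0.
by move/max_idPr ->.
Qed.

Lemma softr_dist lam u : 0 <= lam -> `|softr lam u - u| <= lam.
Proof.
move=> lam0; rewrite {2}(numEsg u) -mulrBr normrM normr_sg.
have [_|_] := eqVneq u 0; rewrite ?mul0r ?mul1r //.
have [ul|_] := leP (`|u| - lam) 0.
  by rewrite sub0r normrN normr_id; lra.
by rewrite addrAC subrr sub0r normrN ger0_norm.
Qed.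

End Sparse.

Lemma exists_subset_card (T : finType) (A : {set T}) m :
  (m <= #|A|)%N -> exists2 B : {set T}, B \subset A & #|B| = m.
Proof.
move=> mA; exists [set x in take m (enum A)].
  by apply/fintype.subsetP => x; rewrite inE => /mem_take; rewrite mem_enum.
rewrite cardsE; move/card_uniqP: (take_uniq m (enum_uniq (mem A))) => ->.
by rewrite size_takel // -cardE.
Qed.

Lemma cardsUD (T : finType) (A B : {set T}) : #|A :|: B| = (#|A :\: B| + #|B|)%N.
Proof.
rewrite -(cardsID B (A :|: B)) addnC finset.setDUl finset.setDv finset.setU0.
by rewrite finset.setUC finset.setUK.
Qed.

Lemma cardsU3D_le (T : finType) (A B C : {set T}) :
  (#|A :|: B :|: C| <= #|A :\: C| + #|B :\: C| + #|C|)%N.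
Proof. by rewrite cardsUD finset.setDUl leq_add2r cardsU leq_subr. Qed.

(** * One iteration of Algorithm 1 *)

Section OneStep.
Variables (R : realType) (n d s : nat) (U : 'M[R]_(n, d)).
Variables (xstar xt : 'cV[R]_d) (e : 'cV[R]_n) (Del : R).
Hypothesis xstar_sparse : (#|supp xstar| <= s)%N.
Hypothesis xt_offsupport : (#|supp xt :\: supp xstar| <= s)%N.
Hypothesis xt_close : norm2 (xt - xstar) <= Del.

Let K := rip_delta U s + Num.sqrt 2 * roc_theta U s.
Let noise := norminf (U^T *m e).
(* For [s = 0] the junk value [K / 0 = 0] gives [lam = noise]. *)
Let lam := K / Num.sqrt s%:R * Del + noise.
Let h := xt - xstar.
Let g := h - U^T *m (U *m h).
Let f := U^T *m e.
Let xhat := xt - U^T *m (U *m xt - (U *m xstar + e)).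
Let x' := soft xhat lam.

Let K_ge0 : 0 <= K.
Proof. by rewrite addr_ge0 ?mulr_ge0 ?sqrtr_ge0 ?rip_delta_ge0 ?roc_theta_ge0. Qed.

Let noise_ge0 : 0 <= noise.
Proof. exact: norminf_ge0. Qed.

Let Del_ge0 : 0 <= Del.
Proof. exact: le_trans (norm2_ge0 _) xt_close. Qed.

Let lam_ge0 : 0 <= lam.
Proof. by apply: addr_ge0 => //; rewrite mulr_ge0 ?divr_ge0 ?sqrtr_ge0. Qed.

Let sqrt_s_lam : (0 < s)%N -> Num.sqrt s%:R * lam = K * Del + Num.sqrt s%:R * noise.
Proof.
move=> s_gt0; have sqrt_s_neq0 : Num.sqrt s%:R != 0 :> R by rewrite gt_eqF // sqrtr_gt0 ltr0n.
by rewrite /lam; field.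
Qed.

Let sqrt_s_lam_le : Num.sqrt s%:R * lam <= K * Del + Num.sqrt s%:R * noise.
Proof.
have [->|/sqrt_s_lam ->//] := posnP s.
by rewrite sqrtr0 !mul0r addr0 mulr_ge0.
Qed.

Let xhat_err : xhat - xstar = g + f.
Proof.
rewrite /xhat /g /f /h !(mulmxBr, mulmxDr, mulmxN).
by apply/matrixP => i j; rewrite !mxE; ring.
Qed.

Let xhat_coord i : xhat i 0 = xstar i 0 + (g i 0 + f i 0).
Proof.
have := congr1 (fun v : 'cV[R]_d => v i 0) xhat_err; rewrite /= mxE [RHS]mxE => <-.
by rewrite [(- xstar) i 0]mxE addrCA subrr addr0.
Qed.

Let supp_h : supp h \subset supp xt :|: supp xstar.
Proof. by rewrite supp_subr_subset ?finset.subsetUl ?finset.subsetUr. Qed.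

Let new_support_large i : i \in supp x' :\: supp xstar -> lam < `|g i 0 + f i 0|.
Proof.
rewrite !inE negbK => /andP[/eqP xstar_i]; rewrite /x' soft_coord => /(softr_neq0 lam_ge0).
by rewrite xhat_coord xstar_i add0r.
Qed.

Lemma step_offsupport_card : (#|supp x' :\: supp xstar| <= s)%N.
Proof.
have [s0|s_gt0] := posnP s.
  have h0 : h = 0.
    have S0 : supp xt :|: supp xstar = finset.set0.
      apply/cards0_eq/eqP; rewrite -leqn0 cardsUD.
      by move: xt_offsupport xstar_sparse; rewrite s0 !leqn0 => /eqP-> /eqP->.
    apply/matrixP => i j; rewrite (ord1 j) [RHS]mxE.
    by move/supp_subsetP: supp_h; apply; rewrite S0 inE.
  have g0 : g = 0 by rewrite /g h0 !mulmx0 subrr.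
  have lam_noise : lam = noise by rewrite /lam s0 sqrtr0 invr0 mulr0 mul0r add0r.
  rewrite s0 leqn0 cards_eq0; apply: contraT => /finset.set0Pn [i /new_support_large].
  rewrite g0 mxE add0r lam_noise.
  by have := norminf_ge f i; rewrite -/noise; lra.
rewrite leqNgt; apply/negP => /ltnW/exists_subset_card [T TN Ts].
have TS : [disjoint T & supp xstar].
  by apply: disjointWl TN _; rewrite disjoint_sym disjoint_setD.
have gf_small : norm2 (prj T (g + f)) <= Num.sqrt s%:R * lam.
  rewrite prjD; apply: le_trans (norm2D_le _ _) _.
  have := norm2_prj_gram_roc U TS (eq_leq Ts) xstar_sparse xt_offsupport supp_h.
  have := norm2_prj_norminf T f; have := ler_wpM2l K_ge0 xt_close.
  have := sqrt_s_lam s_gt0; rewrite Ts -/g -/f -/K -/noise -/h; lra.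
have gf_large : s%:R * lam ^+ 2 < sqnorm2 (prj T (g + f)).
  rewrite sqnorm2_prj_sum -Ts -sum1_card natr_sum mulr_suml.
  apply: ltr_sum => [|i iT]; last first.
    rewrite mul1r mxE -[(g i 0 + f i 0) ^+ 2]real_normK ?num_real // ltr_pXn2r ?nnegrE //.
    exact: new_support_large (fintype.subsetP TN i iT).
  have [i0 i0T] : exists i0, i0 \in T by apply/card_gt0P; rewrite Ts.
  by apply/hasP; exists i0; rewrite ?mem_index_enum.
move: gf_small; rewrite norm2_le ?mulr_ge0 ?sqrtr_ge0 // exprMn sqr_sqrtr //; lra.
Qed.

Let S := supp x' :|: supp xstar.
Let lam_on_xstar := prj (supp xstar) (const_mx lam : 'cV[R]_d).

Let step_error_coord i :
  `|(x' - xstar) i 0| <= `|prj S (g + f) i 0| + `|lam_on_xstar i 0|.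
Proof.
rewrite [(x' - xstar) i 0]mxE [(- xstar) i 0]mxE !prjE [const_mx _ _ _]mxE.
rewrite [(g + f) i 0]mxE /x' soft_coord.
have [xs_i|xs_i] := boolP (i \in supp xstar).
  have iS : i \in S by rewrite finset.in_setU xs_i orbT.
  rewrite iS (ger0_norm lam_ge0).
  have -> : softr lam (xhat i 0) - xstar i 0
      = (xhat i 0 - xstar i 0) + (softr lam (xhat i 0) - xhat i 0) by rewrite addrC addrA subrK.
  apply: le_trans (ler_normD _ _) _; rewrite lerD ?softr_dist // xhat_coord.
  by rewrite addrC addKr.
rewrite (notin_supp xs_i) subr0 normr0 addr0.
have [->|x'_i] := eqVneq (softr lam (xhat i 0)) 0; first by rewrite normr0.
have iS : i \in S by rewrite finset.in_setU inE /x' soft_coord x'_i.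
rewrite iS; apply: le_trans (softr_norm_le _ lam_ge0) _.
by rewrite xhat_coord (notin_supp xs_i) add0r.
Qed.

Lemma step_error : norm2 (x' - xstar)
  <= (K + rip_delta U (3 * s)) * Del + (1 + Num.sqrt 2) * Num.sqrt s%:R * noise.
Proof.
set W := supp x' :|: supp xt :|: supp xstar.
have W3s : (#|W| <= 3 * s)%N.
  apply: leq_trans (cardsU3D_le _ _ _) _.
  by rewrite !mulSn mul0n addn0 addnA !leq_add ?step_offsupport_card.
have SW : S \subset W by rewrite finset.setSU // finset.subsetUl.
have hW : supp h \subset W.
  by apply: fintype.subset_trans supp_h _; rewrite finset.setSU // finset.subsetUr.
have S2s : (#|S| <= 2 * s)%N.
  by rewrite cardsUD mul2n -addnn leq_add ?step_offsupport_card.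
have Sg := norm2_prj_gram_rip U W3s SW hW.
have Sf : norm2 (prj S f) <= Num.sqrt 2 * Num.sqrt s%:R * noise.
  apply: le_trans (norm2_prj_norminf _ _) _.
  by rewrite ler_wpM2r // -sqrtrM // -natrM ler_wsqrtr // ler_nat.
have lam_part : norm2 lam_on_xstar <= Num.sqrt s%:R * lam.
  rewrite norm2_le ?mulr_ge0 ?sqrtr_ge0 // sqnorm2_prj_sum exprMn sqr_sqrtr //.
  under eq_bigr => i _ do rewrite mxE.
  by rewrite sumr_const -[X in X <= _]mulr_natl ler_wpM2r ?sqr_ge0 ?ler_nat.
apply: le_trans (norm2_le_coordD step_error_coord) _.
have := norm2D_le (prj S g) (prj S f); rewrite -prjD.
have := ler_wpM2l (rip_delta_ge0 U (3 * s)) xt_close.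
move: Sg; rewrite -/h -/g; have := sqrt_s_lam_le; lra.
Qed.

End OneStep.

Unset Implicit Arguments.

Theorem theorem2 (R : realType) (n d s : nat) (U : 'M[R]_(n, d))
  (xstar : 'cV[R]_d) (e : 'cV[R]_n) (Delta : nat -> R) :
  (2 * s <= d)%N ->
  (#|supp xstar| <= s)%N ->
  let y := U *m xstar + e in
  let gamma := rip_delta U s + Num.sqrt 2 * roc_theta U s + rip_delta U (3 * s) in
  let noise := norminf (U^T *m e) in
  gamma < 1 ->
  norm2 ((0 : 'cV[R]_d) - xstar) <= Delta 1%N ->
  (forall t : nat, (1 <= t)%N ->
     Delta t.+1 = gamma * Delta t + (1 + Num.sqrt 2) * Num.sqrt s%:R * noise) ->
  let lam := fun t : nat =>
    (rip_delta U s + Num.sqrt 2 * roc_theta U s) / Num.sqrt s%:R * Delta t + noise in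
  let x := alg1 U y lam in
  forall t : nat,
    (#|supp (x t.+1) :\: supp xstar| <= s)%N /\
    norm2 (x t.+1 - xstar) <=
      gamma ^+ t * Delta 1%N
      + (1 - gamma ^+ t) / (1 - gamma) * (1 + Num.sqrt 2) * Num.sqrt s%:R * noise.
Proof.
(* [2 s <= d] is the paper's standing condition for [theta_{s,s}] to involve disjoint sets
   of size [s]; the argument does not need it. *)
move=> _ xstar_sparse y gamma noise gamma_lt1 Delta1 Delta_rec lam x.
have invariant t :
    (#|supp (x t.+1) :\: supp xstar| <= s)%N /\ norm2 (x t.+1 - xstar) <= Delta t.+1.
  elim: t => [|t [off close]]; first by rewrite /= supp0 finset.set0D cards0.
  split; first exact: (step_offsupport_card U e xstar_sparse off close).
  by rewrite Delta_rec //; apply: (step_error U e xstar_sparse off close).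
have Delta_closed t : Delta t.+1 = gamma ^+ t * Delta 1%N
    + (1 - gamma ^+ t) / (1 - gamma) * (1 + Num.sqrt 2) * Num.sqrt s%:R * noise.
  have gamma_neq1 : 1 - gamma != 0 by rewrite subr_eq0 eq_sym lt_eqF.
  elim: t => [|t IH]; first by rewrite expr0 mul1r subrr !mul0r addr0.
  by rewrite Delta_rec // IH exprS; field.
by move=> t; rewrite -Delta_closed; apply: invariant.
Qed.
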